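(* Let $\mathcal{M}=(\Sigma,\Gamma,\mathcal{H},U,M)$ be a QMM, let $n=\dim\mathcal{H}$, and let $\rho_s,\rho_t$ be density operators on $\mathcal{H}$. Then: (1) $\rho_s\sim\rho_t \iff \rho_s\sim^{n^2-1}\rho_t \iff \rho_s\sim_{n^2-1}\rho_t$; (2) for every $k\in\mathbb{N}$, $\rho_s\sim_k\rho_t \iff \rho_s\sim_k^{n^2-1}\rho_t$.
   Context: A quantum Mealy machine (QMM) is a tuple $\mathcal{M}=(\Sigma,\Gamma,\mathcal{H},U,M)$ where $\Sigma$ (inputs) and $\Gamma$ (outputs) are finite alphabets, $\mathcal{H}$ is a finite-dimensional complex Hilbert space, $U=\{U_\sigma:\sigma\in\Sigma\}$ is a family of unitary operators on $\mathcal{H}$, and $M=\{M_\gamma:\gamma\in\Gamma\}$ is a family of linear operators on $\mathcal{H}$ with $\sum_{\gamma}M_\gamma^\dagger M_\gamma=I$. For a word $a$, $|a|$ is its length, $a[i]$ its $i$-th letter (1-indexed), $a[l:r]=a[l]\cdots a[r]$ (empty word $\epsilon$ if $l>r$), and $U_a=U_{a[|a|]}\cdots U_{a[1]}$, $U_\epsilon=I$. A scheduler for $a\in\Sigma^*$ is a finite non-decreasing sequence $\mathcal{S}=(s_1\le\dots\le s_{|\mathcal{S}|})$ of integers with $0\le s_1$ and $s_{|\mathcal{S}|}\le|a|$ (possibly empty). With $s_0=0$, $s_{|\mathcal{S}|+1}=|a|$, set $a_i=a[s_{i-1}+1:s_i]$ for $1\le i\le|\mathcal{S}|+1$. For $b=b_1\cdots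 b_{|\mathcal{S}|}\in\Gamma^{|\mathcal{S}|}$ let $V_{b|a,\mathcal{S}}=U_{a_{|\mathcal{S}|+1}}M_{b_{|\mathcal{S}|}}U_{a_{|\mathcal{S}|}}\cdots M_{b_1}U_{a_1}$, and for an operator $\rho$ let $\rho^{\mathcal{M}}_{b|a,\mathcal{S}}=V_{b|a,\mathcal{S}}\rho V_{b|a,\mathcal{S}}^\dagger$. For a density operator $\rho$, $\Pr^{\mathcal{M}}_\rho(b|a,\mathcal{S})=\operatorname{tr}(\rho^{\mathcal{M}}_{b|a,\mathcal{S}})$. Two density operators $\rho_s,\rho_t$ are: equivalent ($\rho_s\sim\rho_t$) if $\Pr^{\mathcal{M}}_{\rho_s}(b|a,\mathcal{S})=\Pr^{\mathcal{M}}_{\rho_t}(b|a,\mathcal{S})$ for all $a\in\Sigma^*$, schedulers $\mathcal{S}$ for $a$ and $b\in\Gamma^{|\mathcal{S}|}$; equivalent up to $k$ measurements ($\rho_s\sim_k\rho_t$) if this holds for all such triples with $|\mathcal{S}|\le k$; $m$-equivalent ($\rho_s\sim^m\rho_t$) if it holds for all triples with $|a|+|\mathcal{S}|\le m$; and $m$-equivalent up to $k$ measurements ($\rho_s\sim^m_k\rho_t$) if it holds for all triples with $|\mathcal{S}|\le k$ and $|a|+|\mathcal{S}|\le m$. *)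

From HB Require Import structures.
From mathcomp Require Import all_boot all_order all_algebra.
Set Implicit Arguments. Unset Strict Implicit. Unset Printing Implicit Defensive.
Import Order.TTheory GRing.Theory Num.Theory.
Local Open Scope ring_scope.
Local Open Scope sesquilinear_scope.

(* The Hilbert space H of dimension n is modelled as column vectors 'cV[C]_n,
   C an arbitrary numClosedFieldType (a model of the complex numbers);
   operators are n x n matrices, and A ^t* is the conjugate transpose. *)

Section QMM.
Variables (C : numClosedFieldType) (n : nat) (Sigma Gamma : finType).

Definition is_QMM (U : Sigma -> 'M[C]_n) (M : Gamma -> 'M[C]_n) : Prop :=
  (forall s, U s \is unitarymx) /\
  \sum_(g : Gamma) (M g)^t* *m M g = 1%:M.

Definition psd (rho : 'M[C]_n) : Prop :=
  forall v : 'cV[C]_n, 0 <= (v^t* *m rho *m v) 0 0.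

Definition density (rho : 'M[C]_n) : Prop := psd rho /\ \tr rho = 1.

Variables (U : Sigma -> 'M[C]_n) (M : Gamma -> 'M[C]_n).

(* U_w = U_{w[|w|]} ... U_{w[1]}, U_eps = I *)
Definition Uword (w : seq Sigma) : 'M[C]_n :=
  foldl (fun A x => U x *m A) 1%:M w.

(* a[l+1 : r] (1-indexed letters l+1..r), empty if l >= r *)
Definition subword (a : seq Sigma) (l r : nat) : seq Sigma := drop l (take r a).

Definition scheduler (a : seq Sigma) (S : seq nat) : Prop :=
  sorted leq S /\ all (fun s => s <= size a)%N S.

(* Vaux a prev S b: U_{a_{k+1}} M_{b_k} U_{a_k} ... M_{b_1} U_{a_1}, where
   the first segment starts right after position prev. *)
Fixpoint Vaux (a : seq Sigma) (prev : nat) (S : seq nat) (b : seq Gamma)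
  : 'M[C]_n :=
  match S, b with
  | s :: S', g :: b' => Vaux a s S' b' *m M g *m Uword (subword a prev s)
  | _, _ => Uword (subword a prev (size a))
  end.

Definition Vop (a : seq Sigma) (S : seq nat) (b : seq Gamma) : 'M[C]_n :=
  Vaux a 0 S b.

Definition Pr (rho : 'M[C]_n) (a : seq Sigma) (S : seq nat) (b : seq Gamma) : C :=
  \tr (Vop a S b *m rho *m (Vop a S b)^t*).

Definition equiv_on (P : seq Sigma -> seq nat -> Prop) (rs rt : 'M[C]_n) : Prop :=
  forall (a : seq Sigma) (S : seq nat) (b : seq Gamma),
    scheduler a S -> size b = size S -> P a S -> Pr rs a S b = Pr rt a S b.

Definition qequiv := equiv_on (fun _ _ => True).
Definition qequiv_k (k : nat) := equiv_on (fun _ S => (size S <= k)%N).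
Definition qequiv_m (m : nat) := equiv_on (fun a S => (size a + size S <= m)%N).
Definition qequiv_mk (m k : nat) :=
  equiv_on (fun a S => (size S <= k)%N /\ (size a + size S <= m)%N).

End QMM.

(* Write a run (a, S, b) as one word w over Sigma + Gamma, input letters and
   measurement outcomes interleaved; then Pr_rs - Pr_rt = tr (Phi_w (rs - rt)),
   where Phi_w composes the maps X |-> U X U^* and X |-> M X M^*, the number of
   measurements is the number of Gamma-letters and |a| + |S| = |w|.  Let R(j, m)
   be the span of the Phi_w (rs - rt) with at most j Gamma-letters and |w| <= m.
   In m these spaces gain a dimension at every step until they stop growing, and
   a level stops growing for good once the level j - 1 feeding it has; hence in
   the n^2-dimensional operator space R(j, n^2 - 1) already contains every
   Phi_w (rs - rt) with at most j Gamma-letters, and a trace vanishing on the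
   short words vanishes on all of them. *)

From HB Require Import structures.
From mathcomp Require Import all_boot all_order all_algebra.
From mathcomp Require Import zify.
Set Implicit Arguments. Unset Strict Implicit. Unset Printing Implicit Defensive.
Import Order.TTheory GRing.Theory Num.Theory.
Local Open Scope ring_scope.
Local Open Scope sesquilinear_scope.

Definition is_inr (A B : Type) (x : A + B) : bool := if x is inr _ then true else false.

Section WordAction.
Variables (K : fieldType) (vT : vectType K) (I J : finType).
Variables (f : I -> 'End(vT)) (g : J -> 'End(vT)).

Definition letter_map (x : I + J) : 'End(vT) :=
  match x with inl i => f i | inr j => g j end.

Definition word_act (w : seq (I + J)) (v : vT) : vT :=
  foldl (fun u x => letter_map x u) v w.

Definition nright (w : seq (I + J)) : nat := count (@is_inr I J) w.

Fact word_act_is_linear w : linear (word_act w).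
Proof. by elim: w => [|x w IH] a u v //=; rewrite linearP IH. Qed.

HB.instance Definition _ w :=
  GRing.isLinear.Build K vT vT _ (word_act w) (word_act_is_linear w).

Lemma word_act_rcons w x v : word_act (rcons w x) v = letter_map x (word_act w v).
Proof. by rewrite /word_act foldl_rcons. Qed.

Lemma nright_rcons w x : nright (rcons w x) = (nright w + is_inr x)%N.
Proof. by rewrite /nright -cats1 count_cat /= addn0. Qed.

Definition sum_img (T : finType) (h : T -> 'End(vT)) (V : {vspace vT}) : {vspace vT} :=
  (\sum_t (h t @: V))%VS.

Lemma sum_imgS (T : finType) (h : T -> 'End(vT)) (V W : {vspace vT}) :
  (V <= W)%VS -> (sum_img h V <= sum_img h W)%VS.
Proof. by move=> VW; apply/subv_sumP => t _; apply: (sumv_sup t) => //; apply: limgS. Qed.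

Lemma mem_sum_img (T : finType) (h : T -> 'End(vT)) (V : {vspace vT}) t v :
  v \in V -> h t v \in sum_img h V.
Proof.
by move=> Vv; apply: (subvP (sumv_sup t (P := xpredT) isT (subvv _))); apply: memv_img.
Qed.

Lemma sum_img_ind (T : finType) (h : T -> 'End(vT)) (V : {vspace vT}) (P : vT -> Prop) :
  P 0 -> (forall u v, P u -> P v -> P (u + v)) ->
  (forall t v, v \in V -> P (h t v)) -> forall u, u \in sum_img h V -> P u.
Proof.
move=> P0 PD Ph u /memv_sumP[vs hvs ->]; apply: (big_ind P) => // t _.
by have /memv_imgP[v Vv ->] := hvs t isT; apply: Ph.
Qed.

Section Reachable.
Variable D : vT.

(* [reach j m] is spanned by the [word_act w D] with [nright w <= j] and
   [size w <= m]; the recursion splits off the last letter of [w]. *)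
Fixpoint reach (j m : nat) : {vspace vT} :=
  if m is m'.+1 then
    (<[D]> + sum_img f (reach j m') +
     (if j is j'.+1 then sum_img g (reach j' m') else 0))%VS
  else <[D]>%VS.

Lemma line_reach j m : (<[D]> <= reach j m)%VS.
Proof. by case: m => [|m] //=; apply: subv_trans (addvSl _ _); apply: addvSl. Qed.

Lemma reach_Sm j m : (reach j m <= reach j m.+1)%VS.
Proof.
elim: m j => [|m IH] j; first exact: (line_reach j 1).
apply: addvS; first by apply: addvS => //; apply: sum_imgS.
by case: j => [|j] //; apply: sum_imgS.
Qed.

Lemma reach_mono j m m' : (m <= m')%N -> (reach j m <= reach j m')%VS.
Proof.
move=> /subnK <-; elim: (m' - m)%N => [|d IH] //.
exact: subv_trans IH (reach_Sm _ _).
Qed.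

Lemma reach_Sj j m : (reach j m <= reach j.+1 m)%VS.
Proof.
elim: m j => [|m IH] j //=.
apply: addvS; first by apply: addvS => //; apply: sum_imgS.
by case: j => [|j]; [apply: sub0v | apply: sum_imgS].
Qed.

Lemma mem_reach w j m :
  (nright w <= j)%N -> (size w <= m)%N -> word_act w D \in reach j m.
Proof.
elim/last_ind: w j m => [|w x IH] j [|m] //=; rewrite ?size_rcons //.
- by move=> _ _; apply: (subvP (line_reach j 0)); apply: memv_line.
- by move=> _ _; apply: (subvP (line_reach j m.+1)); apply: memv_line.
rewrite nright_rcons ltnS word_act_rcons => hj hm.
case: x hj => [i|i] /= hj.
- rewrite addn0 in hj; apply: (subvP (addvSl _ _)); apply: (subvP (addvSr _ _)).
  exact: mem_sum_img (IH _ _ hj hm).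
- case: j hj => [|j]; rewrite addn1 // ltnS => hj.
  exact: (subvP (addvSr _ _)) (mem_sum_img _ _ (IH _ _ hj hm)).
Qed.

Definition reach_stable j m := forall m', (m <= m')%N -> reach j m' = reach j m.

Lemma reach_stableS j m : reach_stable j m -> reach_stable j m.+1.
Proof. by move=> st m' hm; rewrite (st m') ?(st m.+1) //; apply: ltnW. Qed.

Lemma reach_stable_of_step j m :
  reach j m.+1 = reach j m -> (if j is j'.+1 then reach_stable j' m else True) ->
  reach_stable j m.
Proof.
move=> e st_pred; elim=> [|m' IH]; first by rewrite leqn0 => /eqP ->.
rewrite leq_eqVlt => /orP[/eqP <- //|]; rewrite ltnS => hm.
rewrite -[in RHS]e /= (IH hm).
by case: j e st_pred IH => [|j] // e st_pred IH; rewrite (st_pred m' hm).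
Qed.

Lemma dim_reach_lt j m : reach j m.+1 != reach j m ->
  (\dim (reach j m) < \dim (reach j m.+1))%N.
Proof.
by move=> ne; rewrite ltnNge; apply: contra ne => le; rewrite eq_sym eqEdim reach_Sm.
Qed.

Lemma dim_reach_or_stable_step j m :
  (if j is j'.+1 then reach_stable j' m else True) ->
  (m.+1 <= \dim (reach j m))%N ->
  (m.+2 <= \dim (reach j m.+1))%N \/ reach_stable j m.+1.
Proof.
move=> st_pred hd; have [e|ne] := eqVneq (reach j m.+1) (reach j m).
  by right; apply/reach_stableS/reach_stable_of_step.
by left; apply: leq_trans (dim_reach_lt ne).
Qed.

Lemma dim_reach_or_stable j m :
  D != 0 -> (m.+1 <= \dim (reach j m))%N \/ reach_stable j m.
Proof.
move=> nzD; elim: j m => [|j IHj]; elim=> [|m IHm];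
  try by left; rewrite /= dim_vline nzD.
  case: IHm => [hd|st]; last by right; apply: reach_stableS.
  exact: dim_reach_or_stable_step.
case: IHm => [hd|st]; last by right; apply: reach_stableS.
have [hdj|stj] : (m.+2 <= \dim (reach j m.+1))%N \/ reach_stable j m.
  have [hdj|stj] := IHj m; last by right.
  have [hdj1|stj1] := IHj m.+1; first by left.
  have [e|ne] := eqVneq (reach j m.+1) (reach j m).
    right=> m'; rewrite leq_eqVlt => /orP[/eqP <- //|hm'].
    by rewrite (stj1 m' hm') e.
  by left; apply: leq_trans (dim_reach_lt ne).
- by left; apply: leq_trans hdj (dimvS (reach_Sj _ _)).
- exact: dim_reach_or_stable_step.
Qed.

Lemma reach_stable_dim j : D != 0 -> reach_stable j (\dim {:vT}).-1.
Proof.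
move=> nzD; have [hd|//] := dim_reach_or_stable j (\dim {:vT}).-1 nzD.
have full : reach j (\dim {:vT}).-1 = fullv.
  by apply/eqP; rewrite eqEdim subvf; exact: leq_trans (leqSpred _) hd.
by move=> m' hm'; apply/eqP; rewrite eqEsubv (reach_mono _ hm') full subvf.
Qed.

(* Vanishing of a linear observation on [word_act v X] propagates backwards
   through the generators of [reach j m], trading each unfolding step for
   one more letter of [v]. *)
Lemma reach_obs_eq0 (obs : {scalar vT}) k N :
  (forall w, (nright w <= k)%N -> (size w <= N)%N -> obs (word_act w D) = 0) ->
  forall m j X, X \in reach j m -> forall v,
    (nright v + j <= k)%N -> (size v + m <= N)%N -> obs (word_act v X) = 0.
Proof.
move=> obs_short.
have line v X : X \in <[D]>%VS -> (nright v <= k)%N -> (size v <= N)%N ->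
    obs (word_act v X) = 0.
  by case/vlineP=> c -> hk hN; rewrite linearZ scalarZ obs_short ?mulr0.
have sum_ind (T : finType) (h : T -> 'End(vT)) (V : {vspace vT}) v :
    (forall t u, u \in V -> obs (word_act v (h t u)) = 0) ->
    forall u, u \in sum_img h V -> obs (word_act v u) = 0.
  move=> Ph; apply: sum_img_ind => [|u u' hu hu'|//]; first by rewrite !linear0.
  by rewrite !linearD /= hu hu' addr0.
elim=> [|m IH] j X hX v hk hN; first by apply: line => //; lia.
case/memv_addP: hX => _ /memv_addP[d hd [s hs ->]] [t ht ->].
rewrite !linearD /=.
have -> : obs (word_act v d) = 0 by apply: line => //; lia.
have -> : obs (word_act v s) = 0.
  apply: (sum_ind _ f _ v _ s hs) => i u hu.
  by apply: (IH j u hu (inl i :: v)) => /=; lia.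
clear hs hd; case: j IH hk ht => [|j] IH hk ht.
  by move: ht; rewrite memv0 => /eqP ->; rewrite !linear0 !addr0.
rewrite (sum_ind _ g _ v _ t ht) ?addr0 // => i u hu.
by apply: (IH j u hu (inr i :: v)) => /=; lia.
Qed.

Lemma word_obs_eq0 (obs : {scalar vT}) k :
  (forall w, (nright w <= k)%N -> (size w <= (\dim {:vT}).-1)%N ->
     obs (word_act w D) = 0) ->
  forall w, (nright w <= k)%N -> obs (word_act w D) = 0.
Proof.
move=> obs_short w hk; have [->|nzD] := eqVneq D 0; first by rewrite !linear0.
have hw : word_act w D \in reach k (\dim {:vT}).-1.
  rewrite -(reach_stable_dim k nzD (leq_maxr (size w) _)).
  by apply: mem_reach => //; apply: leq_maxl.
by have := reach_obs_eq0 obs_short hw (v := [::]); apply.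
Qed.

End Reachable.
End WordAction.

Section QMMRuns.
Variables (C : numClosedFieldType) (n : nat) (Sigma Gamma : finType).
Variables (U : Sigma -> 'M[C]_n) (M : Gamma -> 'M[C]_n).

Definition letter_mx (x : Sigma + Gamma) : 'M[C]_n :=
  match x with inl s => U s | inr g => M g end.

Definition word_mx (w : seq (Sigma + Gamma)) : 'M[C]_n :=
  foldl (fun A x => letter_mx x *m A) 1%:M w.

Lemma foldl_word_mx (A : 'M[C]_n) w :
  foldl (fun (B : 'M[C]_n) x => letter_mx x *m B) A w = word_mx w *m A.
Proof.
elim: w A => [|x w IH] A /=; first by rewrite mul1mx.
by rewrite /word_mx /= !IH mulmx1 mulmxA.
Qed.

Lemma word_mx_cons x w : word_mx (x :: w) = word_mx w *m letter_mx x.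
Proof. by rewrite /word_mx /= foldl_word_mx mulmx1. Qed.

Lemma word_mx_cat w1 w2 : word_mx (w1 ++ w2) = word_mx w2 *m word_mx w1.
Proof. by rewrite /word_mx foldl_cat foldl_word_mx. Qed.

Lemma word_mx_map_inl u : word_mx (map inl u) = Uword U u.
Proof.
rewrite /word_mx /Uword; move: (1%:M : 'M[C]_n).
by elim: u => //= s u IH A.
Qed.

Fixpoint run (a : seq Sigma) (prev : nat) (S : seq nat) (b : seq Gamma) :
    seq (Sigma + Gamma) :=
  match S, b with
  | s :: S', g :: b' => map inl (subword a prev s) ++ inr g :: run a s S' b'
  | _, _ => map inl (subword a prev (size a))
  end.

Lemma Vaux_run a prev S b : Vaux U M a prev S b = word_mx (run a prev S b).
Proof.
elim: S prev b => [|s S IH] prev [|g b] /=; rewrite ?word_mx_map_inl //.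
by rewrite word_mx_cat word_mx_cons -IH word_mx_map_inl.
Qed.

Lemma nright_run a prev S b :
  size b = size S -> nright (run a prev S b) = size S.
Proof.
have nright_inl u : nright (map (@inl Sigma Gamma) u) = 0%N by elim: u.
elim: S prev b => [|s S IH] prev [|g b] //= [hb].
by rewrite /nright count_cat -/(nright _) nright_inl /= -/(nright _) IH.
Qed.

Lemma run_shift x a prev S b :
  run (x :: a) prev.+1 (map succn S) b = run a prev S b.
Proof. by elim: S prev b => [|s S IH] prev [|g b] //=; rewrite IH. Qed.

Lemma run_cons_inl x a S b :
  run (x :: a) 0 (map succn S) b = inl x :: run a 0 S b.
Proof.
by case: S b => [|s S] [|g b]; rewrite /= /subword ?drop0 ?take_size ?run_shift.
Qed.

Lemma run_surj w : exists a S b, [/\ run a 0 S b = w, scheduler a S,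
  size b = size S & (size a + size S = size w)%N].
Proof.
elim: w => [|[x|g] w [a [S [b [<- [sortS leS] hb hsz]]]]].
- by exists [::], [::], [::].
- exists (x :: a), (map succn S), b; rewrite run_cons_inl size_map hb.
  split=> //=; last by rewrite -hsz.
  split; first by rewrite sorted_map.
  by rewrite all_map; apply: sub_all leS => s /=.
- exists a, (0 :: S), (g :: b); split=> //=; last by rewrite -hsz addnS.
  - by rewrite /subword take0.
  - by split=> //; case: (S) sortS leS.
  - by rewrite hb.
Qed.

Definition conj_mx (A X : 'M[C]_n) : 'M[C]_n := A *m X *m A^t*.

Fact conj_mx_is_linear A : linear (conj_mx A).
Proof. by move=> c X Y; rewrite /conj_mx mulmxDr mulmxDl -!scalemxAr -scalemxAl. Qed.

HB.instance Definition _ A :=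
  GRing.isLinear.Build C 'M[C]_n 'M[C]_n _ (conj_mx A) (conj_mx_is_linear A).

Definition qmm_act : seq (Sigma + Gamma) -> 'M[C]_n -> 'M[C]_n :=
  word_act (fun s => linfun (conj_mx (U s))) (fun g => linfun (conj_mx (M g))).

Lemma qmm_act_conj w X : qmm_act w X = conj_mx (word_mx w) X.
Proof.
elim: w X => [|x w IH] X.
  by rewrite /conj_mx /word_mx /= trmx1 map_mx1 mul1mx mulmx1.
rewrite /qmm_act /= -/qmm_act IH word_mx_cons.
by case: x => ? /=; rewrite lfunE /conj_mx trmx_mul map_mxM !mulmxA.
Qed.

Lemma Pr_subE rs rt a S b :
  Pr U M rs a S b - Pr U M rt a S b = \tr (qmm_act (run a 0 S b) (rs - rt)).
Proof. by rewrite qmm_act_conj /conj_mx /Pr /Vop Vaux_run mulmxBr mulmxBl linearB. Qed.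

Lemma qequiv_mk_k (rs rt : 'M[C]_n) k :
  qequiv_mk U M (n ^ 2 - 1) k rs rt -> qequiv_k U M k rs rt.
Proof.
move=> eq_short a S b _ hb hk; apply/eqP; rewrite -subr_eq0 Pr_subE; apply/eqP.
have dimE : (\dim {:'M[C]_n}).-1 = (n ^ 2 - 1)%N.
  by rewrite dimvf dim_matrix subn1 -mulnn.
apply: (word_obs_eq0 (obs := @mxtrace C n) (k := k)); last by rewrite nright_run.
move=> w hwk; rewrite dimE => hw.
have [a' [S' [b' [def_w sch hb' hsz]]]] := run_surj w; subst w.
transitivity (Pr U M rs a' S' b' - Pr U M rt a' S' b'); first by rewrite Pr_subE.
apply/eqP; rewrite subr_eq0; apply/eqP.
by apply: eq_short => //; rewrite hsz -(nright_run a' 0 hb').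
Qed.

End QMMRuns.

Theorem theorem1 (C : numClosedFieldType) (n : nat) (Sigma Gamma : finType)
  (U : Sigma -> 'M[C]_n) (M : Gamma -> 'M[C]_n) (rs rt : 'M[C]_n) :
  is_QMM U M -> density rs -> density rt ->
  ((qequiv U M rs rt <-> qequiv_m U M (n ^ 2 - 1)%N rs rt) /\
   (qequiv_m U M (n ^ 2 - 1)%N rs rt <-> qequiv_k U M (n ^ 2 - 1)%N rs rt)) /\
  (forall k : nat, qequiv_k U M k rs rt <-> qequiv_mk U M (n ^ 2 - 1)%N k rs rt).
Proof.
move=> _ _ _.
have m_all : qequiv_m U M (n ^ 2 - 1) rs rt -> qequiv U M rs rt.
  move=> eq_m a S b sch hb _; apply: (@qequiv_mk_k _ _ _ _ U M rs rt (size S)) => //.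
  by move=> a' S' b' sch' hb' [_ h]; apply: eq_m.
split; first split.
- by split=> // eq_all a S b sch hb _; apply: eq_all.
- split=> eq_short a S b sch hb h; first exact: m_all.
  by apply: eq_short => //; lia.
- move=> k; split; last exact: qequiv_mk_k.
  by move=> eq_k a S b sch hb [hk _]; apply: eq_k.
Qed.
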